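(* Let $\alpha\in\mathbb{Q}(i)\setminus\mathbb{R}$ with $|\alpha|>1$, with minimal primitive polynomial $P_\alpha(X)=a_2X^2+a_1X+a_0$ ($a_0,a_1,a_2\in\mathbb{Z}$ coprime, $a_2>0$, $P_\alpha(\alpha)=0$), and $\mathcal{D}=\{0,\ldots,|a_0|-1\}$. Write $\alpha=\frac{num(\alpha)}{den(\alpha)}$ with $num(\alpha),den(\alpha)\in\mathbb{Z}[i]$ having no common Gaussian prime divisor. Let $x\in\mathbb{C}$, $k\in\mathbb{Z}$, and $(d_j)_{j\le k}$ a sequence in $\mathcal{D}$ with $d_k\ne0$ such that $x=\sum_{j\le k}d_j\alpha^j$ in $\mathbb{C}$. Then this series is an $\alpha$-expansion of $x$ if and only if it converges to $0$ in $K_p$ for every Gaussian prime $p$ dividing $den(\alpha)$.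
   Context: Let $\Lambda_\alpha=\mathbb{Z}[\alpha]\cap\alpha^{-1}\mathbb{Z}[\alpha^{-1}]$. An $\alpha$-expansion of $x$ is a representation $x=\sum_{j\le k}d_j\alpha^j$ with $d_j\in\mathcal{D}$, $d_k\ne0$, such that for every $l\le k$, $\sum_{j=l}^k d_j\alpha^{j-l}\in\Lambda_\alpha$. For a Gaussian prime $p$, $\nu_p:\mathbb{Q}(i)\to\mathbb{Z}\cup\{\infty\}$ is the exponent of $p$ in the (unique up to units and associates) factorization of a nonzero element into Gaussian primes, $\nu_p(0)=\infty$; the $p$-adic absolute value is $|x|_p=N(p)^{-\nu_p(x)}$ with $N(p)$ the norm of $p$, and $K_p$ is the completion of $\mathbb{Q}(i)$ with respect to $|\cdot|_p$. *)

From HB Require Import structures.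
From mathcomp Require Import all_boot all_order all_algebra.
From mathcomp Require Export complex.
From mathcomp Require Export reals.
Set Implicit Arguments. Unset Strict Implicit. Unset Printing Implicit Defensive.
Import Order.TTheory GRing.Theory Num.Theory.
Local Open Scope ring_scope.

Section Defs.
Variable R : realType.
Local Notation C := (R[i]).

Definition iC : C := Complex 0 1.

Definition in_Qi (z : C) : Prop :=
  exists a b : rat, z = ratr a + ratr b * iC.

Definition gint (z : C) : Prop :=
  exists a b : int, z = a%:~R + b%:~R * iC.

Definition gdvd (p z : C) : Prop := exists w, gint w /\ z = p * w.

Definition gprime (p : C) : Prop :=
  [/\ gint p, p != 0, ~ (exists w, gint w /\ p * w = 1) &
      forall a b, gint a -> gint b -> gdvd p (a * b) -> gdvd p a \/ gdvd p b].

(* nu_p(z) >= M  (for z in Q(i); z = 0 included):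
   z = p^M * u / v with u, v Gaussian integers and p not dividing v.
   Equivalently |z|_p <= N(p)^(-M). *)
Definition pval_ge (p z : C) (M : nat) : Prop :=
  exists u v, [/\ gint u, gint v, ~ gdvd p v & z * v = p ^+ M * u].

Definition in_Zpoly (a z : C) : Prop :=
  exists q : {poly int}, z = (map_poly intr q).[a].
Definition in_Lambda (a z : C) : Prop :=
  in_Zpoly a z /\ exists q : {poly int}, z = a^-1 * (map_poly intr q).[a^-1].

(* partial sum  S_(k-m) = sum_(j = k-m)^k d_j a^j  (m : nat, so l = k - m ranges
   over all integers l <= k) *)
Definition psum (a : C) (k : int) (d : int -> nat) (m : nat) : C :=
  \sum_(i < m.+1) (d (k - i%:Z))%:R * a ^ (k - i%:Z).

(* normalized tail sum  sum_(j = l)^k d_j a^(j-l)  with l = k - m *)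
Definition ntail (a : C) (k : int) (d : int -> nat) (m : nat) : C :=
  \sum_(i < m.+1) (d (k - i%:Z))%:R * a ^+ (m - i).

Definition series_to (a : C) (k : int) (d : int -> nat) (x : C) : Prop :=
  forall e : R, 0 < e -> exists N : nat, forall m : nat, (N <= m)%N ->
    `|x - psum a k d m| < Complex e 0.

(* the series sum_(j <= k) d_j a^j converges to 0 in K_p, i.e. its partial sums
   (elements of Q(i)) tend to 0 for |.|_p, i.e. nu_p(partial sums) -> +oo *)
Definition padic_to0 (p a : C) (k : int) (d : int -> nat) : Prop :=
  forall M : nat, exists N : nat, forall m : nat, (N <= m)%N ->
    pval_ge p (psum a k d m) M.

Definition alpha_expansion (a : C) (nD : nat) (k : int) (d : int -> nat)
    (x : C) : Prop :=
  [/\ series_to a k d x,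
      (forall j : int, j <= k -> (d j < nD)%N),
      d k != 0%N &
      forall m : nat, in_Lambda a (ntail a k d m)].

End Defs.

From HB Require Import structures.
From mathcomp Require Import all_boot all_order all_algebra.
From mathcomp Require Import complex reals.
From mathcomp Require Import zify ring lra.
From Stdlib Require Import Classical.
Set Implicit Arguments. Unset Strict Implicit. Unset Printing Implicit Defensive.
Import Order.TTheory GRing.Theory Num.Theory.
Local Open Scope ring_scope.

(* Write alpha = num / den and beta = 1 / alpha, a root of a0 X^2 + a1 X + a2.  With
   P_N = sum_(i <= N) d_(k-i) X^i, the partial sums are alpha^k P_N(beta) and the
   normalised tails are alpha^m P_m(beta), so the expansion condition says that
   P_m(beta) lies in beta^(m+1) Z[beta] for every m.  At a Gaussian prime p | den,
   nu_p(beta) >= 1 and nu_p >= 0 on Z[beta] (num is prime to den), while multiplying by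
   alpha lowers nu_p by less than N(den); this gives the direct implication.
   Conversely, if Q(beta) has large valuation at every p | den, then den * conj(den)
   divides Q(0) in Z[i]; since a2 divides N(den), a2 | Q(0), and a2 = - beta (a1 + a0 beta)
   then writes Q(beta) = beta Q'(beta) with Q' in Z[X], at a bounded cost in valuation.
   Doing this m+1 times to P_N(beta) for N large and truncating P_N to P_m shows that
   P_m(beta) lies in beta^(m+1) Z[beta]. *)

Lemma divz_centered (x n : int) : 0 < n ->
  exists q r : int, x = q * n + r /\ 4 * r ^+ 2 <= n ^+ 2.
Proof.
move=> n_gt0; have x_eq := divz_eq x n.
have r_ge0 : 0 <= (x %% n)%Z by rewrite modz_ge0 // gt_eqF.
have r_lt : (x %% n < n)%Z := ltz_pmod x n_gt0.
suff [q [r [-> r_small]]] : exists q r : int, x = q * n + r /\ - n <= 2 * r <= n.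
  by exists q, r; split => //; move: r_small => /andP[? ?]; nia.
case: (leP (2 * (x %% n)%Z) n) => r_small.
  by exists (x %/ n)%Z, (x %% n)%Z; split => //; lia.
by exists ((x %/ n)%Z + 1), ((x %% n)%Z - n); split; lia.
Qed.

Section GaussianIntegers.
Variable R : realType.
Local Notation C := R[i].
Implicit Types (z w p u v : C).

Definition gi (a b : int) : C := Complex a%:~R b%:~R.

Lemma gi_int (a : int) : (a%:~R : C) = gi a 0.
Proof. by rewrite -(rmorph_int (real_complex R)). Qed.

Lemma gi_nat (m : nat) : (m%:R : C) = gi m 0.
Proof. exact: (gi_int m). Qed.

Lemma gi_add a b c d : gi a b + gi c d = gi (a + c) (b + d).
Proof. by rewrite /gi !rmorphD. Qed.

Lemma gi_opp a b : - gi a b = gi (- a) (- b).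
Proof. by rewrite /gi !rmorphN. Qed.

Lemma gi_mul a b c d : gi a b * gi c d = gi (a * c - b * d) (a * d + b * c).
Proof. by rewrite /gi !(rmorphB, rmorphD, rmorphM). Qed.

Lemma gi_conj a b : conjc (gi a b) = gi a (- b).
Proof. by rewrite /gi rmorphN. Qed.

Lemma gi_inj a b c d : gi a b = gi c d -> a = c /\ b = d.
Proof. by case=> /intr_inj -> /intr_inj ->. Qed.

Lemma gintP z : gint z <-> exists a b, z = gi a b.
Proof.
have giE a b : a%:~R + b%:~R * iC R = gi a b.
  have -> : iC R = gi 0 1 by rewrite /gi rmorph0 rmorph1.
  by rewrite !gi_int gi_mul gi_add; congr gi; lia.
by split=> -[a [b ->]]; exists a, b; rewrite giE.
Qed.

Lemma gint_gi a b : gint (gi a b). Proof. by apply/gintP; exists a, b. Qed.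
Lemma gint_int (a : int) : gint (a%:~R : C). Proof. by rewrite gi_int; apply: gint_gi. Qed.
Lemma gint0 : gint (0 : C). Proof. exact: (gint_int 0). Qed.
Lemma gint1 : gint (1 : C). Proof. exact: (gint_int 1). Qed.

Lemma gintD z w : gint z -> gint w -> gint (z + w).
Proof. by move=> /gintP[a [b ->]] /gintP[c [d ->]]; rewrite gi_add; apply: gint_gi. Qed.

Lemma gintN z : gint z -> gint (- z).
Proof. by move=> /gintP[a [b ->]]; rewrite gi_opp; apply: gint_gi. Qed.

Lemma gintB z w : gint z -> gint w -> gint (z - w).
Proof. by move=> gz gw; apply/gintD/gintN. Qed.

Lemma gintM z w : gint z -> gint w -> gint (z * w).
Proof. by move=> /gintP[a [b ->]] /gintP[c [d ->]]; rewrite gi_mul; apply: gint_gi. Qed.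

Lemma gintX z m : gint z -> gint (z ^+ m).
Proof.
by move=> gz; elim: m => [|m IHm]; [rewrite expr0; apply: gint1 | rewrite exprS; apply: gintM].
Qed.

Lemma gintJ z : gint z -> gint (conjc z).
Proof. by move=> /gintP[a [b ->]]; rewrite gi_conj; apply: gint_gi. Qed.

Lemma gint_trace z : gint z -> exists t : int, t%:~R = z + conjc z.
Proof.
by move=> /gintP[a [b ->]]; exists (a + a); rewrite gi_conj gi_add gi_int; congr gi; lia.
Qed.

Definition gauss_norm (z : C) : nat :=
  absz (Num.floor (complex.Re z) ^+ 2 + Num.floor (complex.Im z) ^+ 2).

Lemma gauss_norm_gi a b : gauss_norm (gi a b) = absz (a ^+ 2 + b ^+ 2).
Proof. by rewrite /gauss_norm /= !intrKfloor. Qed.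

Lemma gauss_normE z : gint z -> ((gauss_norm z)%:R : C) = z * conjc z.
Proof.
move=> /gintP[a [b ->]]; rewrite gauss_norm_gi gi_conj gi_mul gi_nat; congr gi; last lia.
by rewrite gez0_abs ?addr_ge0 ?sqr_ge0 // mulrN opprK !expr2.
Qed.

Lemma gauss_normM z w : gint z -> gint w -> gauss_norm (z * w) = (gauss_norm z * gauss_norm w)%N.
Proof.
move=> gz gw; apply/eqP; rewrite -(eqr_nat C) natrM.
by rewrite (gauss_normE (gintM gz gw)) (gauss_normE gz) (gauss_normE gw) rmorphM; apply/eqP; ring.
Qed.

Lemma gauss_norm_eq0 z : gint z -> (gauss_norm z == 0%N) = (z == 0).
Proof.
move=> /gintP[a [b ->]]; rewrite gauss_norm_gi; apply/eqP/eqP => [ab0|].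
  by have [-> ->] : a = 0 /\ b = 0 by lia.
by move=> ab0; have [-> ->] := gi_inj (etrans ab0 (gi_int 0)).
Qed.

Lemma gauss_norm_gt0 z : gint z -> z != 0 -> (0 < gauss_norm z)%N.
Proof. by move=> gz z0; rewrite lt0n gauss_norm_eq0. Qed.

Lemma gint_edivP a b : gint a -> gint b -> b != 0 ->
  exists q r, [/\ gint q, gint r, a = b * q + r & (gauss_norm r < gauss_norm b)%N].
Proof.
move=> /gintP[x [y ->]] /gintP[c [e ->]] b0.
have N_gt0 : 0 < c ^+ 2 + e ^+ 2.
  by have := gauss_norm_gt0 (gint_gi c e) b0; rewrite gauss_norm_gi; lia.
(* The quotient is the Gaussian integer nearest to a / b = (x + iy) (c - ie) / (c^2 + e^2). *)
have [q1 [r1 [def_r1 r1_small]]] := divz_centered (x * c + y * e) N_gt0.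
have [q2 [r2 [def_r2 r2_small]]] := divz_centered (y * c - x * e) N_gt0.
exists (gi q1 q2), (gi x y - gi c e * gi q1 q2); split.
- exact: gint_gi.
- by apply/gintB/gintM; apply: gint_gi.
- by rewrite addrC subrK.
rewrite gi_mul gi_opp gi_add !gauss_norm_gi.
set s := x + _; set t := y + _.
have normMN : (s ^+ 2 + t ^+ 2) * (c ^+ 2 + e ^+ 2) = r1 ^+ 2 + r2 ^+ 2.
  rewrite /s /t (_ : r1 = x * c + y * e - q1 * (c ^+ 2 + e ^+ 2)); last lia.
  by rewrite (_ : r2 = y * c - x * e - q2 * (c ^+ 2 + e ^+ 2)); [ring | lia].
have : 4 * (s ^+ 2 + t ^+ 2) * (c ^+ 2 + e ^+ 2) <= 2 * (c ^+ 2 + e ^+ 2) * (c ^+ 2 + e ^+ 2).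
  by rewrite -mulrA normMN; lia.
rewrite ler_pM2r // => st_small.
have : 0 <= s ^+ 2 + t ^+ 2 by rewrite addr_ge0 ?sqr_ge0.
lia.
Qed.

Implicit Types (a b c d : C).

Lemma gdvdxx a : gdvd a a.
Proof. by exists 1; rewrite mulr1; split; first exact: gint1. Qed.

Lemma gdvd1 z : gint z -> gdvd 1 z.
Proof. by move=> gz; exists z; rewrite mul1r. Qed.

Lemma gdvd_mulr a b c : gint c -> gdvd a b -> gdvd a (b * c).
Proof. by move=> gc [w [gw ->]]; exists (w * c); rewrite mulrA; split => //; apply: gintM. Qed.

Lemma gdvd_mull a b c : gint c -> gdvd a b -> gdvd a (c * b).
Proof. by move=> gc ab; rewrite mulrC; apply: gdvd_mulr. Qed.

Lemma gdvd_trans a b c : gdvd a b -> gdvd b c -> gdvd a c.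
Proof.
by move=> [w [gw ->]] [v [gv ->]]; exists (w * v); rewrite mulrA; split => //; apply: gintM.
Qed.

Lemma gdvdD a b c : gdvd a b -> gdvd a c -> gdvd a (b + c).
Proof.
by move=> [w [gw ->]] [v [gv ->]]; exists (w + v); rewrite mulrDr; split => //; apply: gintD.
Qed.

Lemma gdvdN a b : gdvd a b -> gdvd a (- b).
Proof. by move=> [w [gw ->]]; exists (- w); rewrite mulrN; split => //; apply: gintN. Qed.

Lemma gdvdB a b c : gdvd a b -> gdvd a c -> gdvd a (b - c).
Proof. by move=> ab ac; apply/gdvdD/gdvdN. Qed.

Lemma gdvd_mul a b c d : gdvd a b -> gdvd c d -> gdvd (a * c) (b * d).
Proof.
move=> [w [gw ->]] [v [gv ->]]; exists (w * v).
by rewrite mulrACA; split => //; apply: gintM.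
Qed.

Lemma gdvd_exp2l a m n : gint a -> (m <= n)%N -> gdvd (a ^+ m) (a ^+ n).
Proof.
by move=> ga le_mn; exists (a ^+ (n - m)); rewrite -exprD subnKC //; split => //; apply: gintX.
Qed.

Lemma gdvd_mul2l p a b : p != 0 -> gdvd (p * a) (p * b) -> gdvd a b.
Proof.
by move=> p0 [w [gw def_pb]]; exists w; split => //; apply: (mulfI p0); rewrite def_pb mulrA.
Qed.

Lemma gdvdJ a b : gdvd a b -> gdvd (conjc a) (conjc b).
Proof. by move=> [w [gw ->]]; exists (conjc w); rewrite rmorphM; split => //; apply: gintJ. Qed.

Definition gunit z := exists w, gint w /\ z * w = 1.

Lemma gunit_gdvd u z : gunit u -> gint z -> gdvd u z.
Proof.
by move=> [w [gw uw1]] gz; exists (w * z); rewrite mulrA uw1 mul1r; split => //; apply: gintM.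
Qed.

Lemma gdvd_gunit u z : gint z -> gunit u -> gdvd z u -> gunit z.
Proof.
move=> gz [w [gw uw1]] [t [gt def_u]].
by exists (t * w); split; [apply: gintM | rewrite mulrA -def_u].
Qed.

Lemma gauss_norm1_gunit z : gint z -> gauss_norm z = 1%N -> gunit z.
Proof. by move=> gz nz1; exists (conjc z); split; [apply: gintJ | rewrite -gauss_normE // nz1]. Qed.

Lemma gdvd_leq_gauss_norm a b : gint a -> gint b -> b != 0 -> gdvd a b ->
  (gauss_norm a <= gauss_norm b)%N.
Proof.
move=> ga gb b0 [w [gw def_b]]; rewrite def_b gauss_normM // leq_pmulr // gauss_norm_gt0 //.
by apply: contraNneq b0 => w0; rewrite def_b w0 mulr0.
Qed.

Lemma gprime_gint p : gprime p -> gint p. Proof. by case. Qed.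
Lemma gprime_neq0 p : gprime p -> p != 0. Proof. by case. Qed.
Lemma gprime_nunit p : gprime p -> ~ gunit p. Proof. by case. Qed.

Lemma gprime_dvdM p a b : gprime p -> gint a -> gint b ->
  gdvd p (a * b) -> gdvd p a \/ gdvd p b.
Proof. by case=> _ _ _; apply. Qed.

Lemma gprime_gt1 p : gprime p -> (1 < gauss_norm p)%N.
Proof.
move=> pp; have gp := gprime_gint pp; have := gauss_norm_gt0 gp (gprime_neq0 pp).
case: (gauss_norm p =P 1%N) => [/(gauss_norm1_gunit gp) /(gprime_nunit pp) // | ].
by case: (gauss_norm p) => [|[|]].
Qed.

Lemma gprimeJ p : gprime p -> gprime (conjc p).
Proof.
move=> pp; split.
- exact/gintJ/gprime_gint.
- by rewrite conjc_eq0 gprime_neq0.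
- move=> [w [gw pw1]]; apply: (gprime_nunit pp); exists (conjc w); split; first exact: gintJ.
  by rewrite -[p]conjcK -rmorphM pw1 rmorph1.
- move=> a b ga gb /gdvdJ; rewrite rmorphM conjcK => /(gprime_dvdM pp (gintJ ga) (gintJ gb)).
  by case=> /gdvdJ; rewrite !conjcK; [left | right].
Qed.

Lemma gprime_dvdX p a m : gprime p -> gint a -> gdvd p (a ^+ m) -> gdvd p a.
Proof.
move=> pp ga; elim: m => [|m IHm].
  rewrite expr0 => p_dvd1; case: (gprime_nunit pp).
  by apply: (gdvd_gunit (gprime_gint pp) _ p_dvd1); exists 1; split; [apply: gint1 | apply: mulr1].
by rewrite exprS => /(gprime_dvdM pp ga (gintX m ga)) [|/IHm].
Qed.

Lemma gprime_ndvdM p a b : gprime p -> gint a -> gint b ->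
  ~ gdvd p a -> ~ gdvd p b -> ~ gdvd p (a * b).
Proof. by move=> pp ga gb pNa pNb /(gprime_dvdM pp ga gb) []. Qed.

Lemma gprime_ndvdX p a m : gprime p -> gint a -> ~ gdvd p a -> ~ gdvd p (a ^+ m).
Proof. by move=> pp ga pNa /(gprime_dvdX pp ga). Qed.

Lemma Gauss_gdvd_prime_pow p a b m : gprime p -> gint a -> gint b -> ~ gdvd p a ->
  gdvd (p ^+ m) (a * b) -> gdvd (p ^+ m) b.
Proof.
move=> pp ga; elim: m b => [|m IHm] b gb pNa; first by rewrite expr0 => _; apply: gdvd1.
rewrite exprS => pm_ab.
have : gdvd p (a * b) by apply: gdvd_trans pm_ab; apply/gdvd_mulr/gdvdxx/gintX/gprime_gint.
case/(gprime_dvdM pp ga gb) => // -[b' [gb' def_b]].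
rewrite def_b; apply: gdvd_mul (gdvdxx p) _; apply: IHm => //.
by apply: (gdvd_mul2l (gprime_neq0 pp)); rewrite mulrCA -def_b.
Qed.

Lemma gprime_pow_dvd_ltn p z m : gprime p -> gint z -> z != 0 ->
  gdvd (p ^+ m) z -> (m < gauss_norm z)%N.
Proof.
move=> pp gz z0; have gp := gprime_gint pp.
move/(gdvd_leq_gauss_norm (gintX m gp) gz z0).
have -> : gauss_norm (p ^+ m) = (gauss_norm p ^ m)%N.
  elim: m => [|m IHm]; first by rewrite expr0 -[1]/(gi 1 0) gauss_norm_gi.
  by rewrite exprS gauss_normM ?IHm ?expnS //; apply: gintX.
apply: leq_trans; apply: (leq_trans (ltn_expl m (isT : (1 < 2)%N))).
by elim: m => // m IHm; rewrite !expnS leq_mul // gprime_gt1.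
Qed.

Lemma gprime_pow_decomp p z : gprime p -> gint z -> z != 0 ->
  exists e z', [/\ gint z', z = p ^+ e * z', ~ gdvd p z' & (e < gauss_norm z)%N].
Proof.
move=> pp; have gp := gprime_gint pp.
have [n] := ubnP (gauss_norm z); elim: n z => // n IHn z /ltnSE le_zn gz z0.
have [[z1 [gz1 def_z]] | pNz] := classic (gdvd p z); last first.
  by exists 0%N, z; rewrite expr0 mul1r; split => //; apply: gauss_norm_gt0.
have z1_0 : z1 != 0 by apply: contraNneq z0 => z1_0; rewrite def_z z1_0 mulr0.
have lt_z1z : (gauss_norm z1 < gauss_norm z)%N.
  rewrite def_z gauss_normM // -[X in (X < _)%N]mul1n ltn_mul2r.
  by rewrite gauss_norm_gt0 // gprime_gt1.
have [e [z' [gz' def_z1 pNz' lt_e]]] := IHn z1 (leq_trans lt_z1z le_zn) gz1 z1_0.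
exists e.+1, z'; split => //; first by rewrite def_z def_z1 exprS mulrA.
exact: leq_ltn_trans lt_e lt_z1z.
Qed.

Lemma gint_bezout a b : gint a -> gint b -> a != 0 ->
  exists u v, [/\ gint u, gint v, a * u + b * v != 0,
                  gdvd (a * u + b * v) a & gdvd (a * u + b * v) b].
Proof.
move=> ga gb a0.
suff: forall n u v, gint u -> gint v -> a * u + b * v != 0 ->
    (gauss_norm (a * u + b * v)%R < n)%N -> exists u v, [/\ gint u, gint v, a * u + b * v != 0,
                  gdvd (a * u + b * v) a & gdvd (a * u + b * v) b].
  by apply; [apply: gint1 | apply: gint0 | rewrite mulr1 mulr0 addr0 | ].
elim=> // n IHn u v gu gv g0 /ltnSE le_gn.
set g := a * u + b * v in g0 le_gn *.
have gg : gint g by apply/gintD; apply: gintM.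
have [q [r [gq gr def_a lt_ra]]] := gint_edivP ga gg g0.
have def_r : r = a - g * q by rewrite [in RHS]def_a; ring.
have [r0 | r_neq0] := eqVneq r 0; last first.
  apply: (IHn (1 - u * q) (- (v * q))).
  - by apply/gintB/gintM => //; apply: gint1.
  - exact/gintN/gintM.
  - by rewrite (_ : _ + _ = r) // def_r /g; ring.
  - by rewrite (_ : _ + _ = r) ?(leq_trans lt_ra) // def_r /g; ring.
have [q' [r' [gq' gr' def_b lt_rb]]] := gint_edivP gb gg g0.
have def_r' : r' = b - g * q' by rewrite [in RHS]def_b; ring.
have [r'0 | r'_neq0] := eqVneq r' 0; last first.
  apply: (IHn (- (u * q')) (1 - v * q')).
  - exact/gintN/gintM.
  - by apply/gintB/gintM => //; apply: gint1.
  - by rewrite (_ : _ + _ = r') // def_r' /g; ring.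
  - by rewrite (_ : _ + _ = r') ?(leq_trans lt_rb) // def_r' /g; ring.
exists u, v; split => //.
  by exists q; split => //; rewrite [LHS]def_a r0 addr0.
by exists q'; split => //; rewrite [LHS]def_b r'0 addr0.
Qed.

Lemma irreducible_gprime p : gint p -> p != 0 -> ~ gunit p ->
  (forall a b, gint a -> gint b -> p = a * b -> gunit a \/ gunit b) -> gprime p.
Proof.
move=> gp p0 pNunit p_irr; split => // a b ga gb p_ab.
have [pa | pNa] := classic (gdvd p a); [by left | right].
have [u [v [gu gv g0 [w [gw def_p]] g_a]]] := gint_bezout gp ga p0.
have [[h [gh gh1]] | [w' [gw' ww'1]]] := p_irr _ w (gintD (gintM gp gu) (gintM ga gv)) gw def_p.
  rewrite (_ : b = p * (u * h * b) + (a * b) * (v * h)); last first.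
    by rewrite -[b in LHS]mul1r -gh1; ring.
  apply: gdvdD; first by apply: gdvd_mulr (gdvdxx p); apply: gintM => //; apply: gintM.
  by apply: gdvd_mulr p_ab; apply: gintM.
case: pNa; apply: gdvd_trans g_a.
by exists w'; split => //; rewrite [in RHS]def_p -mulrA ww'1 mulr1.
Qed.

Lemma gprime_divisor_exists z : gint z -> z != 0 -> ~ gunit z ->
  exists p, gprime p /\ gdvd p z.
Proof.
have [n] := ubnP (gauss_norm z); elim: n z => // n IHn z /ltnSE le_zn gz z0 zNunit.
have [[a [b [ga gb def_z aNunit bNunit]]] | z_irr] :=
  classic (exists a b, [/\ gint a, gint b, z = a * b, ~ gunit a & ~ gunit b]).
  have a0 : a != 0 by apply: contraNneq z0 => a0; rewrite def_z a0 mul0r.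
  have b0 : b != 0 by apply: contraNneq z0 => b0; rewrite def_z b0 mulr0.
  have lt_az : (gauss_norm a < gauss_norm z)%N.
    rewrite def_z gauss_normM // -[X in (X < _)%N]muln1 ltn_mul2l gauss_norm_gt0 //=.
    have := gauss_norm_gt0 gb b0; case: (gauss_norm b =P 1%N) => [/(gauss_norm1_gunit gb) //|].
    by case: (gauss_norm b) => [|[|]].
  have [p [pp p_a]] := IHn a (leq_trans lt_az le_zn) ga a0 aNunit.
  by exists p; split => //; rewrite def_z; apply: gdvd_mulr.
exists z; split; last exact: gdvdxx.
apply: irreducible_gprime => // a b ga gb def_z.
have [au | aNunit] := classic (gunit a); [by left | right].
by apply: NNPP => bNunit; apply: z_irr; exists a, b.
Qed.

Lemma gprime_dvd_assoc p q : gprime p -> gprime q -> gdvd p q ->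
  exists u, [/\ gint u, gunit u & q = p * u].
Proof.
move=> pp pq [u [gu def_q]]; have gp := gprime_gint pp.
have q0 := gprime_neq0 pq.
have q_pu : gdvd q (p * u) by rewrite -def_q; apply: gdvdxx.
case: (gprime_dvdM pq gp gu q_pu) => [[s [gs def_p]] | [t [gt def_u]]].
  exists u; split => //; exists s; split => //.
  by apply: (mulfI q0); rewrite mulr1 [in RHS]def_q def_p; ring.
case: (gprime_nunit pp); exists t; split => //.
by apply: (mulfI q0); rewrite mulr1 [in RHS]def_q def_u; ring.
Qed.

Lemma gprime_divisors_uniform (F : C -> nat -> Prop) z : gint z -> z != 0 ->
  (forall p N N', F p N -> (N <= N')%N -> F p N') ->
  (forall p u N, gprime p -> gint u -> gunit u -> F p N -> F (p * u) N) ->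
  (forall p, gprime p -> gdvd p z -> exists N, F p N) ->
  exists N, forall p, gprime p -> gdvd p z -> F p N.
Proof.
move=> + + F_mono F_assoc; have [n] := ubnP (gauss_norm z).
elim: n z => // n IHn z /ltnSE le_zn gz z0 F_ex.
have [zu | zNunit] := classic (gunit z).
  by exists 0%N => p pp /(gdvd_gunit (gprime_gint pp) zu) /(gprime_nunit pp).
have [q [pq [z1 [gz1 def_z]]]] := gprime_divisor_exists gz z0 zNunit.
have gq := gprime_gint pq.
have z1_0 : z1 != 0 by apply: contraNneq z0 => z1_0; rewrite def_z z1_0 mulr0.
have lt_z1z : (gauss_norm z1 < gauss_norm z)%N.
  rewrite def_z gauss_normM // -[X in (X < _)%N]mul1n ltn_mul2r.
  by rewrite gauss_norm_gt0 // gprime_gt1.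
have [N1 F_z1] : exists N, forall p, gprime p -> gdvd p z1 -> F p N.
  apply: (IHn _ (leq_trans lt_z1z le_zn) gz1 z1_0) => p pp p_z1.
  by apply: F_ex => //; rewrite def_z; apply: gdvd_mull.
have [Nq F_q] : exists N, F q N by apply: F_ex => //; rewrite def_z; apply: gdvd_mulr (gdvdxx q).
exists (maxn Nq N1) => p pp; rewrite def_z => /(gprime_dvdM pp gq gz1) [p_q | p_z1].
  have [u [gu [u' [gu' uu'1]] def_q]] := gprime_dvd_assoc pp pq p_q.
  have -> : p = q * u' by rewrite def_q -mulrA uu'1 mulr1.
  apply: F_assoc => //; last by apply: F_mono F_q _; rewrite leq_maxl.
  by exists u; rewrite mulrC.
by apply: F_mono (F_z1 p pp p_z1) _; rewrite leq_maxr.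
Qed.

Lemma gdvd_by_prime_powers a b : gint a -> a != 0 -> gint b ->
  (forall p m, gprime p -> gdvd (p ^+ m) a -> gdvd (p ^+ m) b) -> gdvd a b.
Proof.
have [n] := ubnP (gauss_norm a); elim: n a b => // n IHn a b /ltnSE le_an ga a0 gb pow_ab.
have [au | aNunit] := classic (gunit a); first exact: gunit_gdvd.
have [q [pq [a1 [ga1 def_a]]]] := gprime_divisor_exists ga a0 aNunit.
have gq := gprime_gint pq.
have a1_0 : a1 != 0 by apply: contraNneq a0 => a1_0; rewrite def_a a1_0 mulr0.
have lt_a1a : (gauss_norm a1 < gauss_norm a)%N.
  rewrite def_a gauss_normM // -[X in (X < _)%N]mul1n ltn_mul2r.
  by rewrite gauss_norm_gt0 // gprime_gt1.
have [b1 [gb1 def_b]] : gdvd q b.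
  by rewrite -[q]expr1; apply: pow_ab => //; rewrite expr1 def_a; apply: gdvd_mulr (gdvdxx q).
rewrite def_a def_b; apply: gdvd_mul (gdvdxx q) _.
apply: (IHn _ _ (leq_trans lt_a1a le_an) ga1 a1_0 gb1) => p m pp pm_a1.
have [p_q | pNq] := classic (gdvd p q); last first.
  apply: (Gauss_gdvd_prime_pow pp gq gb1 pNq); rewrite -def_b; apply: pow_ab => //.
  by rewrite def_a; apply: gdvd_mull.
have [u [gu [u' [gu' uu'1]] def_q]] := gprime_dvd_assoc pp pq p_q.
have pm1_a : gdvd (p ^+ m.+1) a.
  rewrite def_a def_q exprSr (_ : p * u * a1 = a1 * u * p); last by ring.
  by apply: gdvd_mul (gdvdxx p); apply: gdvd_mulr.
have pm_ub1 : gdvd (p ^+ m) (u * b1).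
  apply: (gdvd_mul2l (gprime_neq0 pp)).
  by rewrite -exprS mulrA -def_q -def_b; apply: pow_ab.
have -> : b1 = u * b1 * u' by rewrite mulrAC uu'1 mul1r.
exact: gdvd_mulr gu' pm_ub1.
Qed.

End GaussianIntegers.
Arguments gint_int {R} a.

Section IntegerPolynomials.
Variable R : realType.
Local Notation C := R[i].
Implicit Types (z : C) (Q : {poly int}).

Definition zhorner Q z : C := (map_poly intr Q).[z].

Lemma zhornerD Q1 Q2 z : zhorner (Q1 + Q2) z = zhorner Q1 z + zhorner Q2 z.
Proof. by rewrite /zhorner rmorphD hornerD. Qed.

Lemma zhornerB Q1 Q2 z : zhorner (Q1 - Q2) z = zhorner Q1 z - zhorner Q2 z.
Proof. by rewrite /zhorner rmorphB hornerD hornerN. Qed.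

Lemma zhornerM Q1 Q2 z : zhorner (Q1 * Q2) z = zhorner Q1 z * zhorner Q2 z.
Proof. by rewrite /zhorner rmorphM hornerM. Qed.

Lemma zhornerC (c : int) z : zhorner c%:P z = c%:~R.
Proof. by rewrite /zhorner map_polyC hornerC. Qed.

Lemma zhornerX z : zhorner 'X z = z.
Proof. by rewrite /zhorner map_polyX hornerX. Qed.

Lemma zhornerXn m z : zhorner 'X^m z = z ^+ m.
Proof. by rewrite /zhorner map_polyXn hornerXn. Qed.

Lemma zhornerZ (c : int) Q z : zhorner (c *: Q) z = c%:~R * zhorner Q z.
Proof. by rewrite -mul_polyC zhornerM zhornerC. Qed.

Lemma zhornerMXaddC Q (c : int) z : zhorner (Q * 'X + c%:P) z = zhorner Q z * z + c%:~R.
Proof. by rewrite /zhorner rmorphD rmorphM /= map_polyX map_polyC hornerMXaddC. Qed.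

Lemma zhorner_sum (I : Type) (r : seq I) (P : pred I) (F : I -> {poly int}) z :
  zhorner (\sum_(i <- r | P i) F i) z = \sum_(i <- r | P i) zhorner (F i) z.
Proof. by rewrite /zhorner rmorph_sum horner_sum. Qed.

End IntegerPolynomials.

Lemma poly_drop1E (Q : {poly int}) : Q = drop_poly 1 Q * 'X + (Q`_0)%:P.
Proof.
rewrite -[Q in LHS](poly_take_drop 1) addrC expr1; congr (_ + _).
by apply/polyP => i; rewrite coef_take_poly coefC; case: i.
Qed.

Section Valuations.
Variable R : realType.
Local Notation C := R[i].
Implicit Types (p u v z : C).

Lemma gdvd_int (t s : int) : gdvd (t%:~R : C) s%:~R -> (t %| s)%Z.
Proof.
move=> [w [/gintP[x [y ->]] def_s]]; move: def_s; rewrite !gi_int gi_mul => /gi_inj[-> _].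
by apply/dvdzP; exists x; rewrite mul0r subr0 mulrC.
Qed.

Lemma pval_ge_mono p z M N : gint p -> (N <= M)%N -> pval_ge p z M -> pval_ge p z N.
Proof.
move=> gp le_NM [u [v [gu gv pNv def_zv]]]; exists (p ^+ (M - N) * u), v; split => //.
  by apply: gintM => //; apply: gintX.
by rewrite def_zv mulrA -exprD subnKC.
Qed.

Lemma pval_geMl p c z M : gint c -> pval_ge p z M -> pval_ge p (c * z) M.
Proof.
move=> gc [u [v [gu gv pNv def_zv]]]; exists (c * u), v; split => //; first exact: gintM.
by rewrite -mulrA def_zv mulrCA.
Qed.

Lemma pval_ge_gdvd p z M : gprime p -> gint z -> pval_ge p z M -> gdvd (p ^+ M) z.
Proof.
move=> pp gz [u [v [gu gv pNv def_zv]]].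
apply: (Gauss_gdvd_prime_pow pp gv gz) => //.
by exists u; rewrite mulrC def_zv; split.
Qed.

Lemma pval_ge_assoc p u z M : gint u -> gunit u -> pval_ge p z M -> pval_ge (p * u) z M.
Proof.
move=> gu [w [gw uw1]] [a [v [ga gv pNv def_zv]]]; exists (w ^+ M * a), v; split => //.
- by apply: gintM => //; apply: gintX.
- by move=> [t [gt def_v]]; apply: pNv; exists (u * t); split; [apply: gintM | rewrite def_v mulrA].
by rewrite def_zv exprMn -mulrA; congr (_ * _); rewrite mulrA -exprMn uw1 expr1n mul1r.
Qed.

End Valuations.

Section ReciprocalRoot.
Variable R : realType.
Local Notation C := R[i].
Implicit Types (p u v z : C) (Q : {poly int}).

Variables (num den : C) (a0 a1 a2 : int).
Hypotheses (gnum : gint num) (gden : gint den) (num0 : num != 0) (den0 : den != 0).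
Hypothesis coprime_num_den : forall p, gprime p -> gdvd p num -> gdvd p den -> False.

Local Notation alpha := (num / den).
Local Notation beta := (den / num).
Local Notation delta := (den * conjc num - conjc den * num).

Lemma num_beta : num * beta = den.
Proof. by rewrite mulrC divfK. Qed.

Lemma alpha_beta : alpha * beta = 1.
Proof. by rewrite mulrA divfK // divff. Qed.

Lemma alpha_neq0 : alpha != 0.
Proof. by rewrite mulf_neq0 ?invr_eq0. Qed.

Lemma gprime_dvd_den_ndvd_num p : gprime p -> gdvd p den -> ~ gdvd p num.
Proof. by move=> pp p_den p_num; apply: (coprime_num_den pp p_num p_den). Qed.

Lemma numX_zhorner_beta Q :
  exists s H, gint H /\ num ^+ s * zhorner Q beta = (Q`_0)%:~R * num ^+ s + den * H.
Proof.
elim/poly_ind: Q => [|Q c [s [H [gH eqH]]]].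
  by exists 0%N, 0; split; [apply: gint0 | rewrite /zhorner rmorph0 horner0 coef0; ring].
exists s.+1, ((Q`_0)%:~R * num ^+ s + den * H); split.
  by apply: gintD; apply: gintM => //; [apply: gint_int | apply: gintX].
rewrite zhornerMXaddC coefD coefMX coefC /= add0r.
rewrite (_ : num ^+ s.+1 * _ = num * beta * (num ^+ s * zhorner Q beta) + c%:~R * num ^+ s.+1).
  by rewrite eqH num_beta; ring.
by rewrite exprS; ring.
Qed.

Lemma normX_zhorner_beta Q : exists s (X Y : int),
  (num * conjc num) ^+ s * zhorner Q beta =
  (Q`_0)%:~R * (num * conjc num) ^+ s + X%:~R * (den * conjc num) + Y%:~R * (den * conjc den).
Proof.
set nnum := num * conjc num; set w := den * conjc num; set nden := den * conjc den.
have [T defT] := gint_trace (gintM gden (gintJ gnum)).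
have nnumE : nnum = (gauss_norm num)%:Z%:~R by rewrite /nnum -gauss_normE.
have ndenE : nden = (gauss_norm den)%:Z%:~R by rewrite /nden -gauss_normE.
have nnum_beta : nnum * beta = w by rewrite /nnum /w -[in RHS]num_beta; ring.
have w_root : w * w = T%:~R * w - nnum * nden.
  by rewrite defT /w /nnum /nden rmorphM /= conjcK; ring.
elim/poly_ind: Q => [|Q c [s [X [Y eqXY]]]].
  by exists 0%N, 0, 0; rewrite /zhorner rmorph0 horner0 coef0; ring.
exists s.+1, (Q`_0 * (gauss_norm num)%:Z ^+ s + X * T + Y * (gauss_norm den)%:Z),
  (- X * (gauss_norm num)%:Z).
rewrite zhornerMXaddC coefD coefMX coefC /= add0r.
rewrite (_ : nnum ^+ s.+1 * _ = nnum * beta * (nnum ^+ s * zhorner Q beta) + c%:~R * nnum ^+ s.+1);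
  last by rewrite exprS; ring.
rewrite eqXY nnum_beta !(rmorphD, rmorphM, rmorphN, rmorphXn) /= -nnumE -ndenE.
apply/eqP; rewrite -subr_eq0; apply/eqP.
by transitivity (X%:~R * (w * w - (T%:~R * w - nnum * nden))); [ring | rewrite w_root subrr mulr0].
Qed.

Lemma pval0_zhorner_beta p Q : gprime p -> gdvd p den -> pval_ge p (zhorner Q beta) 0.
Proof.
move=> pp p_den; have [s [H [gH eqH]]] := numX_zhorner_beta Q.
exists ((Q`_0)%:~R * num ^+ s + den * H), (num ^+ s); split.
- by apply: gintD; apply: gintM => //; [apply: gint_int | apply: gintX].
- exact: gintX.
- exact/(gprime_ndvdX pp gnum)/gprime_dvd_den_ndvd_num.
by rewrite expr0 mul1r -eqH mulrC.
Qed.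

Lemma pval_beta p z M : gprime p -> gdvd p den -> pval_ge p z M -> pval_ge p (beta * z) M.+1.
Proof.
move=> pp p_den [u [v [gu gv pNv def_zv]]]; have [den' [gden' def_den]] := p_den.
exists (den' * u), (v * num); split; first exact: gintM.
- exact: gintM.
- exact/(gprime_ndvdM pp gv gnum pNv)/gprime_dvd_den_ndvd_num.
rewrite (_ : beta * z * _ = z * v * (num * beta)); last by ring.
by rewrite def_zv num_beta def_den exprS; ring.
Qed.

Lemma pval_betaX p z M j : gprime p -> gdvd p den -> pval_ge p z M ->
  pval_ge p (beta ^+ j * z) (M + j).
Proof.
move=> pp p_den pz; elim: j => [|j IHj]; first by rewrite expr0 mul1r addn0.
by rewrite exprS -mulrA addnS; apply: pval_beta.
Qed.

(* [gauss_norm den] bounds the multiplicity of [p] in [den]. *)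
Lemma pval_alpha p z M : gprime p -> gdvd p den ->
  pval_ge p z (M + gauss_norm den) -> pval_ge p (alpha * z) M.
Proof.
move=> pp p_den [u [v [gu gv pNv def_zv]]]; have gp := gprime_gint pp.
have [e [den' [gden' def_den pNden' lt_e]]] := gprime_pow_decomp pp gden den0.
have p0 := gprime_neq0 pp; have pe0 : p ^+ e != 0 by rewrite expf_neq0.
have den'0 : den' != 0 by apply: contraNneq den0 => den'0; rewrite def_den den'0 mulr0.
exists (num * p ^+ (gauss_norm den - e) * u), (v * den'); split.
- by apply: gintM => //; apply: gintM => //; apply: gintX.
- exact: gintM.
- exact: gprime_ndvdM.
rewrite (_ : alpha * z * _ = num * (z * v) / p ^+ e); last first.
  by rewrite def_den; field; rewrite pe0 den'0.
rewrite def_zv (_ : (M + gauss_norm den)%N = M + (gauss_norm den - e) + e)%N; last first.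
  by rewrite -addnA subnK // ltnW.
by rewrite !exprD; field; rewrite pe0.
Qed.

Lemma pval_alphaX p z M j : gprime p -> gdvd p den ->
  pval_ge p z (M + j * gauss_norm den) -> pval_ge p (alpha ^+ j * z) M.
Proof.
move=> pp p_den; elim: j M z => [|j IHj] M z pz; first by rewrite expr0 mul1r; rewrite addn0 in pz.
by rewrite exprSr -mulrA; apply/IHj/pval_alpha; rewrite // -addnA -mulSnr.
Qed.

Lemma pval_alphaz p z M (k : int) : gprime p -> gdvd p den ->
  pval_ge p z (M + `|k|%N * gauss_norm den) -> pval_ge p (alpha ^ k * z) M.
Proof.
move=> pp p_den; case: k => j pz; first exact: pval_alphaX.
have -> : alpha ^ Negz j = beta ^+ j.+1 by rewrite NegzE -exprz_inv invf_div.
apply: pval_ge_mono (gprime_gint pp) _ (pval_betaX _ pp p_den pz); lia.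
Qed.

Lemma coef0_dvd_of_dvd_den p m Q : gprime p -> gdvd p den -> gdvd (p ^+ m) den ->
  pval_ge p (zhorner Q beta) m -> gdvd (p ^+ m) (Q`_0)%:~R.
Proof.
move=> pp p_den pm_den pQ; have [s [H [gH eqH]]] := numX_zhorner_beta Q.
have gL : gint (num ^+ s * zhorner Q beta).
  by rewrite eqH; apply: gintD; apply: gintM => //; [apply: gint_int | apply: gintX].
have pm_L := pval_ge_gdvd pp gL (pval_geMl (gintX s gnum) pQ).
have pNnum := gprime_ndvdX (m := s) pp gnum (gprime_dvd_den_ndvd_num pp p_den).
apply: (Gauss_gdvd_prime_pow pp (gintX s gnum) (gint_int _) pNnum).
rewrite (_ : _ * _ = num ^+ s * zhorner Q beta - den * H); last by rewrite eqH; ring.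
exact: gdvdB pm_L (gdvd_mulr gH pm_den).
Qed.

Hypothesis nonreal : delta != 0.

(* With [L = N(num)^s Q(beta)], both [L] and [conjc L] are divisible by [p ^+ M] because
   [p] and [conjc p] divide [den]; as [L - conjc L = X delta], this forces [p ^+ m] to
   divide the coordinate [X] of [L] along [den * conjc num]. *)
Lemma coef0_dvd_of_conj_dvd_den p m M Q :
  gprime p -> gdvd p den -> gdvd (conjc p) den -> gdvd (p ^+ m) (den * conjc den) ->
  (m + gauss_norm delta <= M)%N ->
  pval_ge p (zhorner Q beta) M -> pval_ge (conjc p) (zhorner Q beta) M ->
  gdvd (p ^+ m) (Q`_0)%:~R.
Proof.
move=> pp p_den pJ_den pm_nden le_mM pQ pJQ; have gp := gprime_gint pp.
have [s [X [Y eqXY]]] := normX_zhorner_beta Q.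
set L := _ * zhorner Q beta in eqXY.
have gnnum : gint (num * conjc num) by apply/gintM/gintJ.
have gL : gint L.
  rewrite eqXY; apply: gintD; first apply: gintD.
  - by apply: gintM; [apply: gint_int | apply: gintX].
  - by apply: gintM; [apply: gint_int | apply/gintM/gintJ].
  - by apply: gintM; [apply: gint_int | apply/gintM/gintJ].
have pM_L := pval_ge_gdvd pp gL (pval_geMl (gintX s gnnum) pQ).
have pM_LJ : gdvd (p ^+ M) (conjc L).
  rewrite -[p]conjcK -rmorphXn; apply: gdvdJ.
  exact: pval_ge_gdvd (gprimeJ pp) gL (pval_geMl (gintX s gnnum) pJQ).
have L_im : L - conjc L = X%:~R * delta.
  rewrite eqXY !(rmorphD, rmorphM, rmorphXn, rmorph_int) /= !conjcK [conjc num * num]mulrC; ring.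
have gdelta : gint delta by apply: gintB; apply: gintM => //; apply: gintJ.
have [j [delta' [gdelta' def_delta pNdelta' lt_j]]] := gprime_pow_decomp pp gdelta nonreal.
have pMj_X : gdvd (p ^+ (M - j)) X%:~R.
  apply: (Gauss_gdvd_prime_pow pp gdelta' (gint_int X) pNdelta').
  apply: (gdvd_mul2l (expf_neq0 j (gprime_neq0 pp))).
  have le_jM : (j <= M)%N by apply: leq_trans (ltnW lt_j) (leq_trans (leq_addl _ _) le_mM).
  by rewrite -exprD subnKC // mulrA -def_delta mulrC -L_im; apply: gdvdB.
have pNnnum : ~ gdvd p (num * conjc num).
  apply: (gprime_ndvdM pp gnum (gintJ gnum)); first exact: gprime_dvd_den_ndvd_num.
  by move/gdvdJ; rewrite conjcK; apply: gprime_dvd_den_ndvd_num (gprimeJ pp) pJ_den.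
have pNnnumX := gprime_ndvdX (m := s) pp gnnum pNnnum.
apply: (Gauss_gdvd_prime_pow pp (gintX s gnnum) (gint_int _) pNnnumX).
rewrite (_ : _ * _ = L - X%:~R * (den * conjc num) - Y%:~R * (den * conjc den)); last first.
  by rewrite eqXY; ring.
apply: gdvdB; first apply: gdvdB.
- by apply: gdvd_trans pM_L; apply: gdvd_exp2l => //; rewrite (leq_trans _ le_mM) ?leq_addr.
- apply: gdvd_mulr; first by apply/gintM/gintJ.
  by apply: gdvd_trans pMj_X; apply: gdvd_exp2l => //; lia.
- exact: gdvd_mull (gint_int Y) pm_nden.
Qed.

Local Notation vbound := (addn (gauss_norm (den * conjc den)) (gauss_norm delta)).

Lemma den_norm_dvd_coef0 Q :
  (forall p, gprime p -> gdvd p den -> pval_ge p (zhorner Q beta) vbound) ->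
  gdvd (den * conjc den) (Q`_0)%:~R.
Proof.
move=> pQ; have gnden : gint (den * conjc den) by apply/gintM/gintJ.
have nden0 : den * conjc den != 0 by rewrite mulf_neq0 ?conjc_eq0.
have coef0_dvd p m : gprime p -> gdvd p den -> gdvd (p ^+ m) (den * conjc den) ->
    gdvd (p ^+ m) (Q`_0)%:~R.
  move=> pp p_den pm_nden; have lt_m := gprime_pow_dvd_ltn pp gnden nden0 pm_nden.
  have [p_denJ | pNdenJ] := classic (gdvd p (conjc den)).
    have pJ_den : gdvd (conjc p) den by rewrite -[den]conjcK; apply: gdvdJ.
    apply: (coef0_dvd_of_conj_dvd_den pp p_den pJ_den pm_nden _ (pQ p pp p_den)).
      by rewrite leq_add2r ltnW.
    exact: pQ (gprimeJ pp) pJ_den.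
  apply: (coef0_dvd_of_dvd_den pp p_den).
    by apply: (Gauss_gdvd_prime_pow pp (gintJ gden) gden pNdenJ); rewrite mulrC.
  by apply: pval_ge_mono (pQ p pp p_den); [apply: gprime_gint | rewrite ltnW ?ltn_addr].
apply: gdvd_by_prime_powers => // [|p [|m] pp pm_nden]; first exact: gint_int.
  by rewrite expr0; apply/gdvd1/gint_int.
have p_nden : gdvd p (den * conjc den).
  by apply: gdvd_trans pm_nden; rewrite exprS; apply/gdvd_mulr/gdvdxx/gintX/gprime_gint.
have [p_den | p_denJ] := gprime_dvdM pp gden (gintJ gden) p_nden; first exact: coef0_dvd.
have pJ_den : gdvd (conjc p) den by rewrite -[den]conjcK; apply: gdvdJ.
have pmJ_nden : gdvd (conjc (p ^+ m.+1)) (den * conjc den).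
  by rewrite mulrC -{2}[den]conjcK -rmorphM; apply: gdvdJ.
rewrite rmorphXn in pmJ_nden.
move: (coef0_dvd _ _ (gprimeJ pp) pJ_den pmJ_nden) => /gdvdJ.
by rewrite -rmorphXn conjcK rmorph_int.
Qed.

Hypothesis a2_dvd_norm_den : (a2 %| (gauss_norm den)%:Z)%Z.

Lemma a2_dvd_coef0 Q :
  (forall p, gprime p -> gdvd p den -> pval_ge p (zhorner Q beta) vbound) -> (a2 %| Q`_0)%Z.
Proof.
move=> pQ; apply: (dvdz_trans a2_dvd_norm_den); apply: gdvd_int.
by move: (den_norm_dvd_coef0 pQ); rewrite -gauss_normE //; apply: id.
Qed.

Hypothesis beta_root : a0%:~R * beta ^+ 2 + a1%:~R * beta + a2%:~R = 0.

Lemma zhorner_beta_dvdX j Q :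
  (forall p, gprime p -> gdvd p den ->
     pval_ge p (zhorner Q beta) (vbound + j * gauss_norm den)) ->
  exists Q', zhorner Q beta = beta ^+ j * zhorner Q' beta.
Proof.
elim: j Q => [|j IHj] Q pQ; first by exists Q; rewrite expr0 mul1r.
have /dvdzP[c def_Q0] : (a2 %| Q`_0)%Z.
  apply: a2_dvd_coef0 => p pp p_den.
  exact: pval_ge_mono (gprime_gint pp) (leq_addr _ _) (pQ p pp p_den).
pose Q' := drop_poly 1 Q - (c * a1)%:P - (c * a0)%:P * 'X.
have def_Q : zhorner Q beta = beta * zhorner Q' beta.
  have a2E : a2%:~R = - (beta * (a1%:~R + a0%:~R * beta)).
    by apply/eqP; rewrite -subr_eq0 opprK -beta_root; apply/eqP; ring.
  rewrite [in LHS](poly_drop1E Q) zhornerMXaddC def_Q0 !zhornerB zhornerM !zhornerC zhornerX.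
  by rewrite !rmorphM /= a2E; ring.
have pQ' p : gprime p -> gdvd p den ->
    pval_ge p (zhorner Q' beta) (vbound + j * gauss_norm den).
  move=> pp p_den; rewrite (_ : zhorner Q' beta = alpha * zhorner Q beta).
    by apply: pval_alpha; rewrite // -addnA -mulSnr; apply: pQ.
  by rewrite def_Q mulrA alpha_beta mul1r.
have [Q'' def_Q'] := IHj Q' pQ'.
by exists Q''; rewrite def_Q def_Q' exprS mulrA.
Qed.

Variables (k : int) (d : int -> nat).

Definition digit_poly (N : nat) : {poly int} := \sum_(i < N.+1) (d (k - i%:Z))%:Z *: 'X^i.

Lemma zhorner_digit_poly N z :
  zhorner (digit_poly N) z = \sum_(i < N.+1) (d (k - i%:Z))%:R * z ^+ i.
Proof. by rewrite zhorner_sum; apply: eq_bigr => i _; rewrite zhornerZ zhornerXn. Qed.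

Lemma psum_digit_poly N : psum alpha k d N = alpha ^ k * zhorner (digit_poly N) beta.
Proof.
rewrite /psum zhorner_digit_poly big_distrr; apply: eq_bigr => i _ /=.
by rewrite mulrCA expfzDr ?alpha_neq0 // -exprz_inv invf_div.
Qed.

Lemma ntail_digit_poly m : ntail alpha k d m = alpha ^+ m * zhorner (digit_poly m) beta.
Proof.
rewrite /ntail zhorner_digit_poly big_distrr; apply: eq_bigr => i _ /=.
have le_im : (i <= m)%N by rewrite -ltnS.
have -> : alpha ^+ m = alpha ^+ (m - i) * alpha ^+ i by rewrite -exprD subnK.
by rewrite mulrCA -mulrA -exprMn alpha_beta expr1n mulr1.
Qed.

Lemma in_Zpoly_ntail m : in_Zpoly alpha (ntail alpha k d m).
Proof.
exists (\sum_(i < m.+1) (d (k - i%:Z))%:Z *: 'X^(m - i)).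
by rewrite -/(zhorner _ alpha) zhorner_sum; apply: eq_bigr => i _; rewrite zhornerZ zhornerXn.
Qed.

Lemma digit_poly_split m N : (m <= N)%N ->
  exists P, digit_poly N = digit_poly m + 'X^(m.+1) * P.
Proof.
elim: N => [|N IHN]; first by rewrite leqn0 => /eqP ->; exists 0; rewrite mulr0 addr0.
rewrite leq_eqVlt => /predU1P[-> | lt_mN]; first by exists 0; rewrite mulr0 addr0.
have [P def_N] := IHN lt_mN; exists (P + (d (k - N.+1%:Z))%:Z *: 'X^(N - m)).
rewrite [digit_poly N.+1]/digit_poly big_ord_recr /= -/(digit_poly N) def_N.
by rewrite mulrDr -addrA -scalerAr -exprD addSn subnKC.
Qed.

Lemma padic_to0_of_in_Lambda : (forall m, in_Lambda alpha (ntail alpha k d m)) ->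
  forall p, gprime p -> gdvd p den -> padic_to0 p alpha k d.
Proof.
move=> Lambda p pp p_den M; exists (M + `|k|%N * gauss_norm den)%N => m le_m.
have [_ [q]] := Lambda m; rewrite invf_div -/(zhorner q beta) ntail_digit_poly => def_tail.
have digit_beta : zhorner (digit_poly m) beta = beta ^+ m.+1 * zhorner q beta.
  rewrite exprSr -mulrA -def_tail mulrA -exprMn [beta * alpha]mulrC alpha_beta.
  by rewrite expr1n mul1r.
rewrite psum_digit_poly digit_beta; apply: pval_alphaz => //.
apply: pval_ge_mono (gprime_gint pp) _ (pval_betaX _ pp p_den (pval0_zhorner_beta _ pp p_den)).
by rewrite add0n ltnW.
Qed.

Lemma in_Lambda_of_padic_to0 : (forall p, gprime p -> gdvd p den -> padic_to0 p alpha k d) ->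
  forall m, in_Lambda alpha (ntail alpha k d m).
Proof.
move=> to0 m; split; first exact: in_Zpoly_ntail.
pose M := addn vbound (m.+1 * gauss_norm den).
have [N0 psum_small] := gprime_divisors_uniform (F := fun p N => forall N', (N <= N')%N ->
     pval_ge p (psum alpha k d N') (M + `|k|%N * gauss_norm den)) gden den0
  (fun p N N' F_N le_NN' N'' le_N'N'' => F_N N'' (leq_trans le_NN' le_N'N''))
  (fun p u N pp gu uu F_N N' le_NN' => pval_ge_assoc gu uu (F_N N' le_NN'))
  (fun p pp p_den => to0 p pp p_den _).
pose N := maxn N0 m.
have digit_small p : gprime p -> gdvd p den -> pval_ge p (zhorner (digit_poly N) beta) M.
  move=> pp p_den; rewrite (_ : zhorner _ beta = alpha ^ (- k) * psum alpha k d N).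
    by apply: pval_alphaz; rewrite // abszN; apply: psum_small; rewrite ?leq_maxl.
  by rewrite psum_digit_poly mulrA -expfzDr ?alpha_neq0 // addNr expr0z mul1r.
have [Q' def_digitN] := zhorner_beta_dvdX digit_small.
have [P def_N] := digit_poly_split (leq_maxr N0 m).
exists (Q' - P); rewrite invf_div -/(zhorner _ beta) ntail_digit_poly.
have -> : zhorner (digit_poly m) beta = beta ^+ m.+1 * zhorner (Q' - P) beta.
  by rewrite zhornerB mulrBr -def_digitN def_N zhornerD zhornerM zhornerXn addrK.
by rewrite exprSr -mulrA mulrA -exprMn alpha_beta expr1n mul1r.
Qed.
End ReciprocalRoot.

Section QuadraticRoot.
Variable R : realType.
Local Notation C := R[i].
Implicit Types (z : C).

Lemma conjc_neq z : complex.Im z != 0 -> conjc z != z.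
Proof.
by case: z => a b /= b0; apply/eqP => -[Nbb]; move: b0; rewrite (_ : b = 0) ?eqxx //; lra.
Qed.

Variables (a0 a1 a2 : int).

Lemma quadratic_vieta z : a2%:~R * z ^+ 2 + a1%:~R * z + a0%:~R = 0 -> conjc z != z ->
  a2%:~R * (z + conjc z) = - a1%:~R /\ a2%:~R * (z * conjc z) = a0%:~R.
Proof.
move=> root nonreal.
have rootJ : a2%:~R * conjc z ^+ 2 + a1%:~R * conjc z + a0%:~R = 0.
  by have := congr1 conjc root; rewrite !(rmorphD, rmorphM, rmorphXn, rmorph_int) rmorph0.
have sum_root : a2%:~R * (z + conjc z) = - a1%:~R.
  have : (z - conjc z) * (a2%:~R * (z + conjc z) + a1%:~R) = 0.
    by rewrite -[RHS](subrr 0) -{1}root -rootJ; ring.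
  by move/eqP; rewrite mulf_eq0 subr_eq0 eq_sym (negbTE nonreal) addr_eq0 => /eqP.
have a1E : a1%:~R = - (a2%:~R * (z + conjc z)) by rewrite sum_root opprK.
split => //; apply/eqP; rewrite -subr_eq0 -oppr_eq0 -[X in _ == X]root a1E.
by apply/eqP; ring.
Qed.

Lemma a2_dvd_gauss_norm_den (num den : C) : gint num -> gint den -> den != 0 ->
  gcdz (gcdz a0 a1) a2 = 1 -> conjc (num / den) != num / den ->
  a2%:~R * (num / den) ^+ 2 + a1%:~R * (num / den) + a0%:~R = 0 ->
  (a2 %| (gauss_norm den)%:Z)%Z.
Proof.
move=> gnum gden den0 gcd1 nonreal root.
have denJ0 : conjc den != 0 by rewrite conjc_eq0.
have [sum_root prod_root] := quadratic_vieta root nonreal.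
rewrite rmorphM /= conjc_inv in sum_root prod_root.
have nnumE : ((gauss_norm num)%:Z%:~R : C) = num * conjc num by rewrite -gauss_normE.
have ndenE : ((gauss_norm den)%:Z%:~R : C) = den * conjc den by rewrite -gauss_normE.
have [t defT] := gint_trace (gintM gnum (gintJ gden)).
have a0_norm : a2 * (gauss_norm num)%:Z = a0 * (gauss_norm den)%:Z.
  apply: (@intr_inj C); rewrite !rmorphM /= nnumE ndenE -prod_root; field.
  by rewrite den0 denJ0.
have a1_norm : a2 * t = - a1 * (gauss_norm den)%:Z.
  apply: (@intr_inj C); rewrite !rmorphM rmorphN /= ndenE -sum_root defT rmorphM /= conjcK.
  by field; rewrite den0 denJ0.
have a2_dvd_mul c : (a2 %| a2 * c)%Z by apply: dvdz_mulr; apply: dvdzz.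
suff : (a2 %| gcdz (gcdz (a0 * (gauss_norm den)%:Z) (a1 * (gauss_norm den)%:Z))
                  (a2 * (gauss_norm den)%:Z))%Z.
  by rewrite -!mulz_gcdl gcd1 mul1r.
rewrite !dvdz_gcd a2_dvd_mul -a0_norm a2_dvd_mul /=.
by rewrite (_ : a1 * _ = a2 * - t) ?a2_dvd_mul // mulrN a1_norm mulNr opprK.
Qed.

Lemma reciprocal_root (num den : C) : num != 0 -> den != 0 ->
  a2%:~R * (num / den) ^+ 2 + a1%:~R * (num / den) + a0%:~R = 0 ->
  a0%:~R * (den / num) ^+ 2 + a1%:~R * (den / num) + a2%:~R = 0 :> C.
Proof.
move=> num0 den0 root.
rewrite -[RHS](mulr0 ((den / num) ^+ 2)) -root; field.
by rewrite num0 den0.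
Qed.

End QuadraticRoot.

Lemma den_conjc_num_neq (R : realType) (num den : R[i]) : den != 0 ->
  conjc (num / den) != num / den -> den * conjc num - conjc den * num != 0.
Proof.
move=> den0; apply: contra; rewrite subr_eq0 => /eqP cross.
rewrite rmorphM /= conjc_inv eqr_div ?conjc_eq0 //.
by apply/eqP; rewrite mulrC cross mulrC.
Qed.

Theorem mainTheorem11 (R : realType) (alpha : R[i]) (a0 a1 a2 : int)
    (num den : R[i]) (x : R[i]) (k : int) (d : int -> nat) :
  in_Qi alpha -> complex.Im alpha != 0 -> 1 < `|alpha| ->
  gcdz (gcdz a0 a1) a2 = 1 -> 0 < a2 ->
  a2%:~R * alpha ^+ 2 + a1%:~R * alpha + a0%:~R = 0 ->
  gint num -> gint den -> den != 0 -> alpha = num / den ->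
  (forall p, gprime p -> gdvd p num -> gdvd p den -> False) ->
  (forall j : int, j <= k -> (d j < `|a0|)%N) -> d k != 0%N ->
  series_to alpha k d x ->
  (alpha_expansion alpha `|a0| k d x <->
   forall p, gprime p -> gdvd p den -> padic_to0 p alpha k d).
Proof.
move=> _ Im_alpha _ gcd1 _ root gnum gden den0 def_alpha coprime digits dk0 series.
subst alpha.
have num0 : num != 0 by apply: contraNneq Im_alpha => ->; rewrite mul0r.
have nonreal := conjc_neq Im_alpha.
have a2_dvd := a2_dvd_gauss_norm_den gnum gden den0 gcd1 nonreal root.
have delta_neq0 := den_conjc_num_neq den0 nonreal.
have beta_root := reciprocal_root num0 den0 root.
split => [[_ _ _ Lambda] | to0]; first exact: padic_to0_of_in_Lambda.
have Lambda := in_Lambda_of_padic_to0 gnum gden num0 den0 coprime delta_neq0 a2_dvd beta_root to0.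
by split.
Qed.
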